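(* Let $(a_i,b_i)_{i\ge1}$ satisfy $\underline a\le a_i\le\bar a<0$ and $0<\underline b\le b_i\le\bar b$ for all $i$. For $N\ge2$ let $U^*=(u_1^*,\dots,u_N^* )$ be the maximizer of $\sum_{i=1}^N(a_iu_i^2+b_iu_i)$ subject to $\sum_{i=1}^Nu_i=0$, and let $W^*=(w_2^*,\dots,w_N^* )$ be the maximizer of $\sum_{i=2}^N(a_iu_i^2+b_iu_i)$ subject to $\sum_{i=2}^Nu_i=0$. Then there is a constant $C$, independent of $N$, such that $|u_i^*-w_i^*|\le C/N$ for all $2\le i\le N$ and all $N\ge2$; in particular $(u_2^*,\dots,u_N^* )-W^*\to0$ componentwise as $N\to\infty$. *)

From HB Require Import structures.
From mathcomp Require Import all_boot all_order all_algebra.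
From mathcomp Require Import all_classical all_reals all_analysis.
Set Implicit Arguments. Unset Strict Implicit. Unset Printing Implicit Defensive.
Import Order.TTheory GRing.Theory Num.Theory.
Local Open Scope ring_scope.

(* Objective  sum_{i=m}^{N} (a_i u_i^2 + b_i u_i); vectors are nat -> R,
   only the components m..N matter. *)
Definition obj (R : realType) (a b u : nat -> R) (m N : nat) : R :=
  \sum_(m <= i < N.+1) (a i * u i ^+ 2 + b i * u i).

Definition is_maximizer (R : realType) (a b : nat -> R) (m N : nat) (u : nat -> R) : Prop :=
  \sum_(m <= i < N.+1) u i = 0 /\
  forall v : nat -> R, \sum_(m <= i < N.+1) v i = 0 -> obj a b v m N <= obj a b u m N.

From HB Require Import structures.
From mathcomp Require Import all_boot all_order all_algebra.
From mathcomp Require Import all_classical all_reals all_analysis.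
From mathcomp Require Import ring lra.

Set Implicit Arguments.
Unset Strict Implicit.
Unset Printing Implicit Defensive.

Import Order.TTheory GRing.Theory Num.Theory numFieldNormedType.Exports.
Local Open Scope classical_set_scope.
Local Open Scope ring_scope.

(* A maximizer u of the concave objective under the zero-sum constraint has a
   Lagrange multiplier: moving mass t from coordinate k to coordinate j changes
   the objective by t (g_j - g_k) + (a_j + a_k) t^2, where g_i = 2 a_i u_i + b_i,
   so all the g_i share a common value mu, and sum_i u_i = 0 forces mu into
   [blo, bhi].  If nu is the multiplier of W, then (u_i - w_i) 2 a_i = mu - nu for
   i >= 2; summing over i >= 2 gives u_1 = (mu - nu) T with
   T = sum_(i >= 2) 1 / (-2 a_i) >= N / (-4 alo), while the multiplier equation at
   i = 1 gives |u_1| <= (bhi - blo) / (-2 ahi).  Hence mu - nu, and with it every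
   u_i - w_i, is O(1/N). *)

Lemma sumr_nat_supp2 (V : nmodType) (m n j k : nat) (F : nat -> V) :
  j != k -> (m <= j < n)%N -> (m <= k < n)%N ->
  (forall i, i != j -> i != k -> F i = 0) ->
  \sum_(m <= i < n) F i = F j + F k.
Proof.
move=> njk hj hk F0.
have uniq_iota : uniq (index_iota m n) by rewrite /index_iota iota_uniq.
rewrite (bigD1_seq j) ?mem_index_iota //= -big_filter.
rewrite (bigD1_seq k) ?mem_filter ?mem_index_iota ?filter_uniq //=;
  last by rewrite eq_sym njk.
rewrite big1_seq ?addr0 // => i /andP[ik]; rewrite mem_filter => /andP[ij _].
exact: F0.
Qed.

Lemma linear_coef0_of_quadratic_le0 (R : realFieldType) (g s : R) :
  (forall t, t * g + s * t ^+ 2 <= 0) -> g = 0.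
Proof.
move=> le0; pose c := 1 + `|s|.
have c_gt0 : 0 < c by rewrite /c; have := normr_ge0 s; lra.
have cs_ge1 : 1 <= c + s by rewrite /c; have := ler_norm (- s); rewrite normrN; lra.
have := le0 (g / c).
have -> : g / c * g + s * (g / c) ^+ 2 = g ^+ 2 * (c + s) / c ^+ 2.
  by field; rewrite gt_eqF.
rewrite pmulr_lle0 ?invr_gt0 ?exprn_gt0 // => g2_le0.
by apply/eqP; rewrite -sqrf_eq0 eq_le sqr_ge0 andbT; nra.
Qed.

Definition transfer {R : zmodType} (u : nat -> R) (j k : nat) (t : R) : nat -> R :=
  fun i => u i + (if i == j then t else if i == k then - t else 0).

Section Transfer.
Variables (R : realType) (a b u : nat -> R) (m N j k : nat).
Hypotheses (njk : j != k) (hj : (m <= j <= N)%N) (hk : (m <= k <= N)%N).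

Let sum_transfer_sub (G : nat -> R -> R) (t : R) :
  \sum_(m <= i < N.+1) (G i (transfer u j k t i) - G i (u i))
  = G j (u j + t) - G j (u j) + (G k (u k - t) - G k (u k)).
Proof.
rewrite (@sumr_nat_supp2 _ _ _ j k) ?ltnS //.
  by rewrite /transfer eqxx eq_sym (negbTE njk) eqxx.
by move=> i /negbTE ij /negbTE ik; rewrite /transfer ij ik addr0 subrr.
Qed.

Lemma sum_transfer t :
  \sum_(m <= i < N.+1) transfer u j k t i = \sum_(m <= i < N.+1) u i.
Proof.
by apply/eqP; rewrite -subr_eq0 -sumrB (sum_transfer_sub (fun _ x => x)); apply/eqP; ring.
Qed.

Lemma obj_transfer t :
  obj a b (transfer u j k t) m N =
  obj a b u m N + t * ((2 * a j * u j + b j) - (2 * a k * u k + b k))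
    + (a j + a k) * t ^+ 2.
Proof.
have := sum_transfer_sub (fun i x => a i * x ^+ 2 + b i * x) t.
rewrite sumrB /obj => dobj.
by rewrite -[LHS](subrK (\sum_(m <= i < N.+1) (a i * u i ^+ 2 + b i * u i))) dobj; ring.
Qed.
End Transfer.

Lemma maximizer_stationary (R : realType) (a b u : nat -> R) (m N : nat) :
  is_maximizer a b m N u -> forall j k, (m <= j <= N)%N -> (m <= k <= N)%N ->
  2 * a j * u j + b j = 2 * a k * u k + b k.
Proof.
move=> [sum_u0 u_max] j k hj hk.
have [-> // | njk] := eqVneq j k.
apply/eqP; rewrite -subr_eq0; apply/eqP.
apply: (linear_coef0_of_quadratic_le0 (s := a j + a k)).
move=> t; have := u_max _ (etrans (sum_transfer u njk hj hk t) sum_u0).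
by rewrite obj_transfer // -addrA gerDl.
Qed.

Lemma multiplier_bounds (R : realType) (a b u : nat -> R) (m N : nat) (lam blo bhi : R) :
  (m <= N)%N -> (forall i, (m <= i <= N)%N -> a i < 0) ->
  (forall i, (m <= i <= N)%N -> blo <= b i <= bhi) ->
  \sum_(m <= i < N.+1) u i = 0 ->
  (forall i, (m <= i <= N)%N -> 2 * a i * u i + b i = lam) ->
  blo <= lam <= bhi.
Proof.
move=> mN a_lt0 b_bnd sum_u0 stat.
have nonempty : (m < N.+1)%N by rewrite ltnS.
apply/andP; split; rewrite leNgt; apply/negP => lam_out.
- have : \sum_(m <= i < N.+1) 0 < \sum_(m <= i < N.+1) u i.
    apply: ltr_sum_nat => // i hi; rewrite ltnS in hi.
    by have := a_lt0 i hi; have := b_bnd i hi; have := stat i hi; nra.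
  by rewrite big1_eq sum_u0 ltxx.
- have : \sum_(m <= i < N.+1) u i < \sum_(m <= i < N.+1) 0.
    apply: ltr_sum_nat => // i hi; rewrite ltnS in hi.
    by have := a_lt0 i hi; have := b_bnd i hi; have := stat i hi; nra.
  by rewrite big1_eq sum_u0 ltxx.
Qed.

Lemma maximizer_multiplier (R : realType) (a b u : nat -> R) (m N : nat) (blo bhi : R) :
  (m <= N)%N -> (forall i, (m <= i <= N)%N -> a i < 0) ->
  (forall i, (m <= i <= N)%N -> blo <= b i <= bhi) ->
  is_maximizer a b m N u ->
  exists2 lam, blo <= lam <= bhi &
    forall i, (m <= i <= N)%N -> 2 * a i * u i + b i = lam.
Proof.
move=> mN a_lt0 b_bnd u_max.
have hm : (m <= m <= N)%N by rewrite leqnn.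
have stat i (hi : (m <= i <= N)%N) := maximizer_stationary u_max hi hm.
exists (2 * a m * u m + b m) => //.
exact: multiplier_bounds mN a_lt0 b_bnd u_max.1 stat.
Qed.

Lemma sumr_inv_ge (R : realFieldType) (m n : nat) (x : nat -> R) (c : R) :
  (forall i, (m <= i < n)%N -> 0 < x i <= c) ->
  (n - m)%:R / c <= \sum_(m <= i < n) (x i)^-1.
Proof.
move=> x_bnd; rewrite mulr_natl -sumr_const_nat.
apply: ler_sum_nat => i /x_bnd /andP[x_gt0 x_le].
by rewrite lef_pV2 ?posrE // (lt_le_trans x_gt0).
Qed.

Lemma sum_inv_neg2_ge (R : realFieldType) (a : nat -> R) (N : nat) (alo ahi : R) :
  ahi < 0 -> (2 <= N)%N -> (forall k, (2 <= k <= N)%N -> alo <= a k <= ahi) ->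
  N%:R / (4 * - alo) <= \sum_(2 <= k < N.+1) (- (2 * a k))^-1.
Proof.
move=> ahi_lt0 N_ge2 a_bnd.
have alo_lt0 : alo < 0 by have := a_bnd 2%N N_ge2; lra.
have N2 : 2 <= N%:R :> R by rewrite ler_nat.
apply: (@le_trans _ _ ((N.+1 - 2)%:R / (2 * - alo))).
  rewrite subSS natrB ?(ltnW N_ge2) //.
  have -> : N%:R / (4 * - alo) = N%:R / 2 / (2 * - alo) by field; lra.
  by rewrite ler_pM2r ?invr_gt0; lra.
apply: sumr_inv_ge => k; rewrite ltnS => /a_bnd; lra.
Qed.

Section DropFirst.
Variables (R : realType) (a b U W : nat -> R) (N : nat) (mu nu : R).
Hypotheses (N_gt0 : (0 < N)%N) (a_neq0 : forall i, (2 <= i <= N)%N -> a i != 0).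
Hypotheses (sum_U0 : \sum_(1 <= i < N.+1) U i = 0) (sum_W0 : \sum_(2 <= i < N.+1) W i = 0).
Hypothesis stat_U : forall i, (1 <= i <= N)%N -> 2 * a i * U i + b i = mu.
Hypothesis stat_W : forall i, (2 <= i <= N)%N -> 2 * a i * W i + b i = nu.

Lemma drop_first_diff i : (2 <= i <= N)%N -> (U i - W i) * (2 * a i) = mu - nu.
Proof.
move=> hi; have hi1 : (1 <= i <= N)%N by case/andP: hi => /ltnW -> ->.
by rewrite -(stat_U hi1) -(stat_W hi); ring.
Qed.

Lemma drop_first_head :
  U 1%N = (mu - nu) * \sum_(2 <= k < N.+1) (- (2 * a k))^-1.
Proof.
have sum_diff : \sum_(2 <= k < N.+1) (U k - W k) = - U 1%N.
  by have := sum_U0; rewrite sumrB sum_W0 big_ltn ?ltnS //; lra.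
rewrite -[U 1%N]opprK -sum_diff -sumrN mulr_sumr; apply: eq_big_nat => k hk.
rewrite ltnS in hk.
by rewrite -(drop_first_diff hk) invrN mulrN mulfK // mulf_neq0 ?a_neq0.
Qed.
End DropFirst.

Lemma stationary_norm_le (R : realFieldType) (a b u mu blo bhi : R) :
  2 * a * u + b = mu -> a < 0 -> blo <= b <= bhi -> blo <= mu <= bhi ->
  `|u| * - (2 * a) <= bhi - blo.
Proof.
move=> stat a_lt0 b_bnd mu_bnd.
rewrite -[X in _ * X <= _]ger0_norm -?normrM; last lra.
have -> : u * - (2 * a) = b - mu by rewrite -stat; ring.
by rewrite ler_norml; lra.
Qed.

Lemma maximizer_drop_first_le (R : realType) (a b U W : nat -> R) (N : nat)
    (alo ahi blo bhi : R) :
  ahi < 0 -> (2 <= N)%N ->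
  (forall i, (1 <= i <= N)%N -> alo <= a i <= ahi) ->
  (forall i, (1 <= i <= N)%N -> blo <= b i <= bhi) ->
  is_maximizer a b 1 N U -> is_maximizer a b 2 N W ->
  forall i, (2 <= i <= N)%N -> `|U i - W i| <= (bhi - blo) * - alo / ahi ^+ 2 / N%:R.
Proof.
move=> ahi_lt0 N_ge2 a_bnd b_bnd U_max W_max i hi.
have N_gt0 : (0 < N)%N by apply: leq_trans N_ge2.
have sub12 k : (2 <= k <= N)%N -> (1 <= k <= N)%N by case/andP => /ltnW -> ->.
have a_lt0 k : (1 <= k <= N)%N -> a k < 0 by move/a_bnd; lra.
have [mu mu_bnd stat_U] := maximizer_multiplier N_gt0 a_lt0 b_bnd U_max.
have [nu _ stat_W] := maximizer_multiplier N_ge2 (fun k hk => a_lt0 k (sub12 k hk))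
  (fun k hk => b_bnd k (sub12 k hk)) W_max.
have a_neq0 k (hk : (2 <= k <= N)%N) : a k != 0 by rewrite ltr0_neq0 // a_lt0 // sub12.
have alo_lt0 : alo < 0 by have := a_bnd 1%N N_gt0; have := a_lt0 1%N N_gt0; lra.
set T := \sum_(2 <= k < N.+1) (- (2 * a k))^-1.
have T_ge : N%:R / (4 * - alo) <= T.
  by apply: sum_inv_neg2_ge ahi_lt0 N_ge2 _ => k /sub12/a_bnd.
have T_ge0 : 0 <= T.
  by apply: le_trans T_ge; rewrite divr_ge0 // ?ler0n //; lra.
have head_bnd : `|mu - nu| * T * (2 * - ahi) <= bhi - blo.
  have U1_bnd : `|U 1%N| * - (2 * a 1%N) <= bhi - blo.
    by apply: (stationary_norm_le (stat_U 1%N N_gt0)); rewrite ?a_lt0 ?b_bnd.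
  apply: le_trans U1_bnd.
  rewrite (drop_first_head N_gt0 a_neq0 U_max.1 W_max.1 stat_U stat_W) -/T.
  rewrite normrM (ger0_norm T_ge0) ler_wpM2l ?mulr_ge0 //.
  by have := a_bnd 1%N N_gt0; lra.
have diff_bnd : `|U i - W i| * (2 * - ahi) <= `|mu - nu|.
  have a_i := a_bnd i (sub12 i hi).
  rewrite -(drop_first_diff stat_U stat_W hi) normrM ler_wpM2l // ltr0_norm; lra.
have N_le : N%:R <= T * (4 * - alo) by rewrite -ler_pdivrMr //; lra.
have ahi2_gt0 : 0 < ahi ^+ 2 by rewrite expr2; nra.
rewrite !ler_pdivlMr ?ltr0n //.
have X_ge0 : 0 <= `|U i - W i| by exact: normr_ge0.
apply: (@le_trans _ _ (`|U i - W i| * (T * (4 * - alo)) * ahi ^+ 2)).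
  by apply: ler_wpM2r; [exact: ltW | exact: ler_wpM2l].
have -> : `|U i - W i| * (T * (4 * - alo)) * ahi ^+ 2 =
          (`|U i - W i| * (2 * - ahi)) * (T * (2 * - ahi)) * - alo by ring.
have neg_alo_ge0 : 0 <= - alo by lra.
have T2_ge0 : 0 <= T * (2 * - ahi) by rewrite mulr_ge0 //; lra.
apply: (@le_trans _ _ (`|mu - nu| * (T * (2 * - ahi)) * - alo)).
  by apply: ler_wpM2r => //; apply: ler_wpM2r.
by rewrite mulrA; apply: ler_wpM2r.
Qed.

Lemma cvg0_of_norm_le_div_nat (R : realType) (u : nat -> R) (C : R) (n0 : nat) :
  (forall n, (n0 <= n)%N -> `|u n| <= C / n%:R) -> u @ \oo --> 0.
Proof.
move=> u_le; apply/cvgrPdist_le => e e_gt0; near=> n.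
rewrite sub0r normrN; apply: le_trans (u_le n _) _; first by near: n; exact: nbhs_infty_ge.
have n_gt0 : 0 < n%:R :> R by rewrite ltr0n; near: n; exact: nbhs_infty_gt.
rewrite ler_pdivrMr // -ler_pdivrMl // mulrC; near: n; exact: nbhs_infty_ger.
Unshelve. all: end_near.
Qed.

Theorem lemma1 (R : realType) (a b : nat -> R) (alo ahi blo bhi : R)
  (hahi : ahi < 0) (hblo : 0 < blo)
  (ha : forall i : nat, (1 <= i)%N -> alo <= a i <= ahi)
  (hb : forall i : nat, (1 <= i)%N -> blo <= b i <= bhi) :
  exists C : R,
    (forall (N : nat) (U W : nat -> R), (2 <= N)%N ->
       is_maximizer a b 1 N U -> is_maximizer a b 2 N W ->
       forall i : nat, (2 <= i <= N)%N -> `|U i - W i| <= C / N%:R)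
    /\
    (forall Uf Wf : nat -> nat -> R,
       (forall N : nat, (2 <= N)%N ->
          is_maximizer a b 1 N (Uf N) /\ is_maximizer a b 2 N (Wf N)) ->
       forall i : nat, (2 <= i)%N ->
         (fun N => Uf N i - Wf N i) @ \oo --> (0 : R)).
Proof.
pose C := (bhi - blo) * - alo / ahi ^+ 2.
have drop_first_le N U W : (2 <= N)%N ->
    is_maximizer a b 1 N U -> is_maximizer a b 2 N W ->
    forall i, (2 <= i <= N)%N -> `|U i - W i| <= C / N%:R.
  move=> N_ge2; apply: maximizer_drop_first_le hahi N_ge2 _ _ => i /andP[i_ge1 _].
    exact: ha.
  exact: hb.
exists C; split=> // Uf Wf UW_max i i_ge2.
apply: (@cvg0_of_norm_le_div_nat _ _ C (maxn 2 i)) => N.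
rewrite geq_max => /andP[N_ge2 i_le].
by have [U_max W_max] := UW_max N N_ge2; apply: drop_first_le; rewrite ?i_ge2.
Qed.
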